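(* Let $R$ be an s-unital ring and let $(P,Q,\psi)$ be an s-unital $R$-system. Suppose that $(S,T,\sigma,B)$ is a semi-full covariant representation of $(P,Q,\psi)$, that $(P,Q,\psi)$ satisfies Condition (FS), and that the ideal $I^{(k)}_{\psi,\sigma}$ of $B_0$ is s-unital for every $k\ge0$. Then $B$ is nearly epsilon-strongly $\mathbb{Z}$-graded.
   Context: Rings are associative, not necessarily unital; for additive subsets $X,Y$ of a ring, $XY$ is the additive subgroup generated by products $xy$. For rings $A,B$, an $A$-$B$-bimodule $M$ is s-unital if for every $x\in M$ there are $a\in A,b\in B$ with $ax=x=xb$. A ring $R$ is s-unital if it is s-unital as an $R$-$R$-bimodule; an ideal is s-unital if it is s-unital as a ring. A $\mathbb{Z}$-graded ring $B=\bigoplus_iB_i$ is nearly epsilon-strongly graded if each $B_i$ is an s-unital $B_iB_{-i}$-$B_{-i}B_i$-bimodule. An $R$-system is a triple $(P,Q,\psi)$ with $P,Q$ $R$-bimodules and $\psi:P\otimes_RQ\to R$ an $R$-bimodule homomorphism; it is s-unital if $R$ is s-unital and $P,Q$ are s-unital $R$-$R$-bimodules. Put $P^{\otimes0}=Q^{\otimes0}=R$, $\psi_0(r\otimes r')=rr'$, $\psi_1=\psi$, and for $n>1$: $Q^{\otimes n}=Q^{\otimes(n-1)}\otimes_RQ$, $P^{\otimes n}=P\otimes_RP^{\otimes(n-1)}$, $\psi_n((p_1\otimes p_2)\otimes(q_2\otimes q_1))=\psi(p_1\psi_{n-1}(p_2\otimes q_2)\otimes q_1)$. A covariant representation is a tuple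 $(S,T,\sigma,B)$ with $B$ a ring, $S:P\to B$, $T:Q\to B$ additive maps, $\sigma:R\to B$ a ring homomorphism, with $S(pr)=S(p)\sigma(r)$, $S(rp)=\sigma(r)S(p)$, $T(qr)=T(q)\sigma(r)$, $T(rq)=\sigma(r)T(q)$, $\sigma(\psi(p\otimes q))=S(p)T(q)$. It is graded if $B$ is generated as a ring by $\sigma(R)\cup S(P)\cup T(Q)$ and $B$ carries a $\mathbb{Z}$-grading with $\sigma(R)\subseteq B_0$, $T(Q)\subseteq B_1$, $S(P)\subseteq B_{-1}$. For a graded covariant representation and $k\ge0$, $I^{(k)}_{\psi,\sigma}$ is the ideal of $B_0$ generated by $\{\sigma(\psi_k(p\otimes q)):p\in P^{\otimes k},q\in Q^{\otimes k}\}$; the (graded) representation is semi-full if $B_{-k}B_k=I^{(k)}_{\psi,\sigma}$ for all $k\ge0$. For $q\in Q,p\in P$ let $\theta_{q,p}(x)=q\psi(p\otimes x)$ ($x\in Q$) and $\theta_{p,q}(y)=\psi(y\otimes q)p$ ($y\in P$); $\mathcal{F}_P(Q)$, $\mathcal{F}_Q(P)$ are the additive groups generated by these maps. Condition (FS): for all finite sets $\{q_i\}\subseteq Q$, $\{p_j\}\subseteq P$ there are $\Theta\in\mathcal{F}_P(Q)$, $\Phi\in\mathcal{F}_Q(P)$ with $\Theta(q_i)=q_i$, $\Phi(p_j)=p_j$. *)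

From HB Require Import structures.
From mathcomp Require Import all_boot all_order all_algebra.
Set Implicit Arguments. Unset Strict Implicit. Unset Printing Implicit Defensive.
Import Order.TTheory GRing.Theory Num.Theory.
Local Open Scope ring_scope.

Record rng := Rng {
  rsort :> zmodType;
  rmul : rsort -> rsort -> rsort;
  rmulA : forall x y z, rmul x (rmul y z) = rmul (rmul x y) z;
  rmulDl : forall x y z, rmul (x + y) z = rmul x z + rmul y z;
  rmulDr : forall x y z, rmul x (y + z) = rmul x y + rmul x z }.

Declare Scope rng_scope.
Notation "x ** y" := (rmul x y) (at level 40, left associativity) : rng_scope.
Open Scope rng_scope.

Record bimod (A B : rng) := Bimod {
  msort :> zmodType;
  lact : A -> msort -> msort;
  ract : msort -> B -> msort;
  lactDl : forall a a' m, lact (a + a') m = lact a m + lact a' m;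
  lactDr : forall a m m', lact a (m + m') = lact a m + lact a m';
  ractDl : forall m m' b, ract (m + m') b = ract m b + ract m' b;
  ractDr : forall m b b', ract m (b + b') = ract m b + ract m b';
  lactA : forall a a' m, lact (a ** a') m = lact a (lact a' m);
  ractA : forall m b b', ract m (b ** b') = ract (ract m b) b';
  lact_ract : forall a m b, lact a (ract m b) = ract (lact a m) b }.

Notation "a *> m" := (lact a m) (at level 40) : rng_scope.
Notation "m <* b" := (ract m b) (at level 40) : rng_scope.

Definition s_unital_bimod (A B : rng) (M : bimod A B) : Prop :=
  forall x : M, exists (a : A) (b : B), a *> x = x /\ x <* b = x.

Definition s_unital_rng (R : rng) : Prop :=
  forall x : R, exists a b : R, a ** x = x /\ x ** b = x.

(* An R-bimodule homomorphism psi : P (x)_R Q -> R is encoded, via the universal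
   property of the balanced tensor product, as an R-balanced biadditive map
   P -> Q -> R which is left R-linear in P and right R-linear in Q. *)
Record rsystem (R : rng) := RSystem {
  sysP : bimod R R;
  sysQ : bimod R R;
  psi : sysP -> sysQ -> R;
  psiDl : forall p p' q, psi (p + p') q = psi p q + psi p' q;
  psiDr : forall p q q', psi p (q + q') = psi p q + psi p q';
  psi_bal : forall p r q, psi (p <* r) q = psi p (r *> q);
  psi_lin_l : forall r p q, psi (r *> p) q = r ** psi p q;
  psi_lin_r : forall p q r, psi p (q <* r) = psi p q ** r }.

Definition s_unital_rsystem (R : rng) (sys : rsystem R) : Prop :=
  s_unital_rng R /\ s_unital_bimod (sysP sys) /\ s_unital_bimod (sysQ sys).

(* psi_k on elementary tensors:
   psiE [:: p1; ...; pk] [:: q1; ...; qk]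
     = psi_k ((p1 (x) ... (x) pk) (x) (qk (x) ... (x) q1))
     = psi (p1 <* psi_{k-1}((p2 (x) .. (x) pk) (x) (qk (x) .. (x) q2)) , q1). *)
Fixpoint psiE (R : rng) (sys : rsystem R) (ps : seq (sysP sys)) (qs : seq (sysQ sys))
    : R :=
  match ps, qs with
  | [:: p], [:: q] => psi p q
  | p :: ps', q :: qs' => psi (p <* psiE ps' qs') q
  | _, _ => 0
  end.
Arguments psiE {R} sys ps qs.

Inductive addspan (M : zmodType) (X : M -> Prop) : M -> Prop :=
  | as_gen x : X x -> addspan X x
  | as_zero : addspan X 0
  | as_sub x y : addspan X x -> addspan X y -> addspan X (x - y).

Definition prodset (B : rng) (X Y : B -> Prop) : B -> Prop :=
  addspan (fun z => exists x y, X x /\ Y y /\ z = x ** y).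

Inductive subrng_gen (B : rng) (X : B -> Prop) : B -> Prop :=
  | sr_gen x : X x -> subrng_gen X x
  | sr_zero : subrng_gen X 0
  | sr_sub x y : subrng_gen X x -> subrng_gen X y -> subrng_gen X (x - y)
  | sr_mul x y : subrng_gen X x -> subrng_gen X y -> subrng_gen X (x ** y).

Inductive ideal_gen (B : rng) (A G : B -> Prop) : B -> Prop :=
  | ig_gen x : G x -> ideal_gen A G x
  | ig_zero : ideal_gen A G 0
  | ig_sub x y : ideal_gen A G x -> ideal_gen A G y -> ideal_gen A G (x - y)
  | ig_mull a x : A a -> ideal_gen A G x -> ideal_gen A G (a ** x)
  | ig_mulr x a : A a -> ideal_gen A G x -> ideal_gen A G (x ** a).

Definition s_unital_subset (B : rng) (I : B -> Prop) : Prop :=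
  forall x, I x -> exists a b, I a /\ I b /\ a ** x = x /\ x ** b = x.

Definition Zgrading (B : rng) (Bi : int -> B -> Prop) : Prop :=
  [/\ (forall i, Bi i 0 /\ forall x y, Bi i x -> Bi i y -> Bi i (x - y)),
      (forall i j x y, Bi i x -> Bi j y -> Bi (i + j) (x ** y)),
      (forall x : B, exists (s : seq int) (f : int -> B),
          (forall i, Bi i (f i)) /\ x = \sum_(i <- s) f i) &
      (forall (s : seq int) (f : int -> B), uniq s -> (forall i, Bi i (f i)) ->
          \sum_(i <- s) f i = 0 -> forall i, i \in s -> f i = 0)].

(* nearly epsilon-strongly graded: each B_i is an s-unital
   B_i B_{-i} - B_{-i} B_i -bimodule *)
Definition nearly_eps_strong (B : rng) (Bi : int -> B -> Prop) : Prop :=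
  forall i x, Bi i x -> exists a b,
    prodset (Bi i) (Bi (- i)) a /\ prodset (Bi (- i)) (Bi i) b /\
    a ** x = x /\ x ** b = x.

Definition covrep (R : rng) (sys : rsystem R) (B : rng)
    (S : sysP sys -> B) (T : sysQ sys -> B) (sigma : R -> B) : Prop :=
  [/\ (forall p p', S (p + p') = S p + S p') /\
      (forall q q', T (q + q') = T q + T q'),
      (forall r r', sigma (r + r') = sigma r + sigma r') /\
      (forall r r', sigma (r ** r') = sigma r ** sigma r'),
      (forall p r, S (p <* r) = S p ** sigma r) /\
      (forall r p, S (r *> p) = sigma r ** S p),
      (forall q r, T (q <* r) = T q ** sigma r) /\
      (forall r q, T (r *> q) = sigma r ** T q) &
      (forall p q, sigma (psi p q) = S p ** T q)].

Definition graded_covrep (R : rng) (sys : rsystem R) (B : rng)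
    (S : sysP sys -> B) (T : sysQ sys -> B) (sigma : R -> B)
    (Bi : int -> B -> Prop) : Prop :=
  [/\ covrep S T sigma,
      (forall b : B, subrng_gen
         (fun x => (exists r, x = sigma r) \/ (exists p, x = S p) \/
                   (exists q, x = T q)) b),
      Zgrading Bi,
      (forall r, Bi 0 (sigma r)) &
      (forall q, Bi 1 (T q)) /\ (forall p, Bi (-1) (S p))].

(* generators of I^{(k)}: sigma(psi_k(p (x) q)); for k >= 1 over elementary
   tensors p = p1 (x) .. (x) pk, q = qk (x) .. (x) q1 (these generate the
   same ideal), and sigma(r r') for k = 0. *)
Definition Igens (R : rng) (sys : rsystem R) (B : rng) (sigma : R -> B)
    (k : nat) : B -> Prop :=
  fun x => match k with
  | 0%N => exists r r' : R, x = sigma (r ** r')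
  | _ => exists (ps : seq (sysP sys)) (qs : seq (sysQ sys)),
           size ps = k /\ size qs = k /\ x = sigma (psiE sys ps qs)
  end.

Definition Ik (R : rng) (sys : rsystem R) (B : rng) (sigma : R -> B)
    (Bi : int -> B -> Prop) (k : nat) : B -> Prop :=
  ideal_gen (Bi 0) (Igens sys sigma k).

Definition semi_full (R : rng) (sys : rsystem R) (B : rng) (sigma : R -> B)
    (Bi : int -> B -> Prop) : Prop :=
  forall (k : nat) (x : B),
    prodset (Bi (- (k%:Z))) (Bi (k%:Z)) x <-> Ik sys sigma Bi k x.

Inductive FPQ (R : rng) (sys : rsystem R) : (sysQ sys -> sysQ sys) -> Prop :=
  | fpq_theta (q : sysQ sys) (p : sysP sys) : FPQ (fun x => q <* psi p x)
  | fpq_zero : FPQ (fun _ => 0)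
  | fpq_sub f g : FPQ f -> FPQ g -> FPQ (fun x => f x - g x).

Inductive FQP (R : rng) (sys : rsystem R) : (sysP sys -> sysP sys) -> Prop :=
  | fqp_theta (p : sysP sys) (q : sysQ sys) : FQP (fun y => psi y q *> p)
  | fqp_zero : FQP (fun _ => 0)
  | fqp_sub f g : FQP f -> FQP g -> FQP (fun y => f y - g y).

Definition condFS (R : rng) (sys : rsystem R) : Prop :=
  forall (qs : seq (sysQ sys)) (ps : seq (sysP sys)),
    exists Theta Phi, FPQ Theta /\ FQP Phi /\
      (forall q, q \in qs -> Theta q = q) /\ (forall p, p \in ps -> Phi p = p).

From HB Require Import structures.
From mathcomp Require Import all_boot all_order all_algebra.
From mathcomp Require Import zify.
Set Implicit Arguments. Unset Strict Implicit. Unset Printing Implicit Defensive.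
Import Order.TTheory GRing.Theory Num.Theory.
Local Open Scope ring_scope.
Local Open Scope rng_scope.

(* Theorem 8: B is nearly epsilon-strongly Z-graded.
   1. Normal forms: by S(p) T(q) = sigma(psi(p, q)) and s-unitality of R, P,
      Q, every element of B is a sum of monomials T(q_1)..T(q_a) sigma(r)
      S(p_b)..S(p_1) of degree a - b; by directness of the grading, an element
      of B_k is a sum of monomials of degree k.
   2. Degree 0: a monomial m equals sigma(r) m, so B_0 = B_0 B_0 = I^(0),
      which is s-unital.
   3. Degree n > 0: monomials of degree n begin with n letters T(q); Condition
      (FS) and induction on n give a common left unit in B_n B_(-n) for
      finitely many of them, and a right unit comes from I^(n) = B_(-n) B_n,
      since finitely many elements of an s-unital ring have a common unit.
   4. Degree -n < 0: the opposite system (P and Q exchanged, products and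
      degrees reversed) satisfies the same hypotheses; apply step 3 to it. *)

Lemma additive0 (M N : zmodType) (f : M -> N) :
  {morph f : x y / x + y} -> f 0 = 0.
Proof. by move=> fD; apply: (@addrI _ (f 0)); rewrite -fD !addr0. Qed.

Lemma additiveB (M N : zmodType) (f : M -> N) :
  {morph f : x y / x + y} -> {morph f : x y / x - y}.
Proof. by move=> fD x y; apply: (@addIr _ (f y)); rewrite -fD !subrK. Qed.

Lemma fin_choice (A : eqType) (W : Type) (w0 : W) (P : A -> W -> Prop) (s : seq A) :
  (forall a, a \in s -> exists w, P a w) ->
  exists f : A -> W, forall a, a \in s -> P a (f a).
Proof.
elim: s => [|a s IH] h; first by exists (fun _ => w0).
have [w hw] := h a (mem_head _ _).
have [|f hf] := IH; first by move=> b hb; apply: h; rewrite in_cons hb orbT.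
exists (fun b => if b == a then w else f b) => b; rewrite in_cons.
by case: eqP => [-> //|_ /= /hf].
Qed.

Section RngFacts.
Variable B : rng.
Implicit Types x y z : B.

Lemma rmul0r x : (0 : B) ** x = 0.
Proof. by apply: (@addrI _ ((0 : B) ** x)); rewrite -rmulDl !addr0. Qed.

Lemma rmulr0 x : x ** (0 : B) = 0.
Proof. by apply: (@addrI _ (x ** 0)); rewrite -rmulDr !addr0. Qed.

Lemma rmulBl x y z : (x - y) ** z = x ** z - y ** z.
Proof. by rewrite (additiveB (f := fun x => x ** z)) // => u v; rewrite rmulDl. Qed.

Lemma rmulBr x y z : x ** (y - z) = x ** y - x ** z.
Proof. by rewrite (additiveB (f := rmul x)) // => u v; rewrite rmulDr. Qed.

Lemma rmulNr x y : (- x) ** y = - (x ** y).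
Proof. by rewrite -sub0r rmulBl rmul0r sub0r. Qed.

Lemma rmulrN x y : x ** (- y) = - (x ** y).
Proof. by rewrite -sub0r rmulBr rmulr0 sub0r. Qed.

Lemma rmul_suml (I : Type) (r : seq I) (P : pred I) (F : I -> B) y :
  (\sum_(i <- r | P i) F i) ** y = \sum_(i <- r | P i) (F i ** y).
Proof. by apply: (big_morph (fun x => x ** y)) => [a b|]; rewrite ?rmulDl ?rmul0r. Qed.

Lemma rmul_sumr (I : Type) (r : seq I) (P : pred I) (F : I -> B) y :
  y ** (\sum_(i <- r | P i) F i) = \sum_(i <- r | P i) (y ** F i).
Proof. by apply: (big_morph (rmul y)) => [a b|]; rewrite ?rmulDr ?rmulr0. Qed.

Lemma prodset_gen (X Y : B -> Prop) x y : X x -> Y y -> prodset X Y (x ** y).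
Proof. by move=> hx hy; apply: as_gen; exists x, y. Qed.

Lemma prodset_mul (X Y X' Y' : B -> Prop) c d e :
  (forall x, X x -> X' (c ** x)) -> (forall y, Y y -> Y' (y ** d)) ->
  prodset X Y e -> prodset X' Y' (c ** e ** d).
Proof.
move=> hX hY; elim => [z [x [y [hx [hy ->]]]]| |u v _ hu _ hv].
- by rewrite rmulA -[_ ** y ** d]rmulA; apply: prodset_gen; auto.
- by rewrite rmulr0 rmul0r; apply: as_zero.
- by rewrite rmulBr rmulBl; apply: as_sub.
Qed.

End RngFacts.

Lemma ideal_gen_closed (B : rng) (A G : B -> Prop) :
  A 0 -> (forall x y, A x -> A y -> A (x - y)) ->
  (forall x y, A x -> A y -> A (x ** y)) -> (forall x, G x -> A x) ->
  forall x, ideal_gen A G x -> A x.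
Proof. by move=> A0 AB AM GA x; elim=> *; auto. Qed.

Definition rng_op (B : rng) : rng :=
  @Rng B (fun x y => y ** x)
    (fun x y z => esym (rmulA z y x))
    (fun x y z => rmulDr z x y) (fun x y z => rmulDl y z x).

Lemma prodset_op (B : rng) (X Y : B -> Prop) x :
  prodset (B := rng_op B) X Y x <-> prodset Y X x.
Proof.
split; elim=> [z [u [v [hu [hv ->]]]]| |u v _ hu _ hv];
  do ?[exact: as_zero | exact: as_sub]; exact: prodset_gen.
Qed.

Lemma ideal_gen_op (B : rng) (A G G' : B -> Prop) x : (forall y, G y <-> G' y) ->
  ideal_gen (B := rng_op B) A G x <-> ideal_gen A G' x.
Proof.
move=> hG; split; elim=> {x} [y /hG ?| |y z _ ? _ ?|a y ? _ ?|y a ? _ ?];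
  by [apply: ig_gen | apply: ig_zero | apply: ig_sub | apply: ig_mulr | apply: ig_mull].
Qed.

Section Grading.
Variables (B : rng) (Bi : int -> B -> Prop).
Hypothesis gradB : Zgrading Bi.

Lemma grade0 i : Bi i 0.
Proof. by have [/(_ i) [h0 _] _ _ _] := gradB. Qed.

Lemma gradeB i x y : Bi i x -> Bi i y -> Bi i (x - y).
Proof. by have [/(_ i) [_ hB] _ _ _] := gradB; apply: hB. Qed.

Lemma gradeN i x : Bi i x -> Bi i (- x).
Proof. by move=> hx; rewrite -sub0r; apply: gradeB => //; apply: grade0. Qed.

Lemma gradeD i x y : Bi i x -> Bi i y -> Bi i (x + y).
Proof. by move=> hx hy; rewrite -[y]opprK; apply: gradeB => //; apply: gradeN. Qed.

Lemma grade_sum i (I : Type) (r : seq I) (P : pred I) (F : I -> B) :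
  (forall j, P j -> Bi i (F j)) -> Bi i (\sum_(j <- r | P j) F j).
Proof. by move=> h; apply: big_ind => //; [apply: grade0 | apply: gradeD]. Qed.

Lemma gradeM i j k x y : i + j = k -> Bi i x -> Bi j y -> Bi k (x ** y).
Proof. by move=> <-; have [_ hM _ _] := gradB; apply: hM. Qed.

Lemma homogeneous_part (L : seq (int * B)) k z :
  (forall l, l \in L -> Bi l.1 l.2) -> Bi k z -> z = \sum_(l <- L) l.2 ->
  z = \sum_(l <- L | l.1 == k) l.2.
Proof.
move=> hL hz hsum.
pose s := undup (k :: map fst L).
pose part i := \sum_(l <- L | l.1 == i) l.2.
pose g i := part i - (if i == k then z else 0).
have hg i : Bi i (g i).
  apply: gradeB; last by case: eqP => [->|_]; [exact: hz | exact: grade0].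
  rewrite /part big_seq_cond; apply: grade_sum => l /andP[hl /eqP <-].
  exact: hL.
have sum_parts : \sum_(i <- s) part i = z.
  rewrite /part; under eq_bigr do rewrite big_mkcond.
  rewrite exchange_big /= hsum; apply: eq_big_seq => l hl.
  have ls : l.1 \in s by rewrite mem_undup in_cons map_f ?orbT.
  rewrite (bigD1_seq l.1) ?undup_uniq //= eqxx big1 ?addr0 // => i /negPf.
  by rewrite eq_sym => ->.
have sum_z : \sum_(i <- s) (if i == k then z else 0) = z.
  rewrite (bigD1_seq k) ?undup_uniq ?mem_undup ?mem_head //= eqxx.
  by rewrite big1 ?addr0 // => i /negPf ->.
have [_ _ _ /(_ s g (undup_uniq _) hg)] := gradB.
rewrite sumrB sum_parts sum_z subrr => /(_ erefl k).
rewrite mem_undup mem_head => /(_ isT) /eqP.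
by rewrite /g eqxx subr_eq0 => /eqP.
Qed.

End Grading.

Lemma Zgrading_op (B : rng) (Bi : int -> B -> Prop) :
  Zgrading Bi -> Zgrading (B := rng_op B) (fun i => Bi (- i)).
Proof.
move=> gradB; rewrite /Zgrading; split=> [i|i j x y hx hy|x|s f us hf hs i hi] /=.
- by split=> [|x y]; [apply: grade0 | apply: gradeB].
- by apply: (gradeM gradB _ hy hx); rewrite opprD addrC.
- have [_ _ /(_ x) [s [f [hf ->]]] _] := gradB.
  exists (map -%R s), (fun i => f (- i)); rewrite big_map.
  by split=> [i|]; [apply: hf | apply: eq_bigr => i _; rewrite opprK].
- have [_ _ _ /(_ (map -%R s) (fun i => f (- i)))] := gradB.
  rewrite map_inj_uniq ?big_map; last exact: oppr_inj.
  move=> /(_ us) h; rewrite -[i]opprK h ?map_f // => [j|].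
    by rewrite -{1}[j]opprK; apply: hf.
  by under eq_bigr do rewrite opprK.
Qed.

Section CommonUnits.
Variables (B : rng) (I : B -> Prop).
Hypothesis I0 : I 0.
Hypothesis IB : forall x y, I x -> I y -> I (x - y).
Hypothesis IM : forall x y, I x -> I y -> I (x ** y).
Hypothesis Iunit : s_unital_subset I.

Lemma subring_add x y : I x -> I y -> I (x + y).
Proof.
move=> hx hy; have -> : x + y = x - (0 - y) by rewrite sub0r opprK.
by apply: IB => //; apply: IB.
Qed.

Definition has_right_unit (x : B) := exists f, I f /\ x ** f = x.

Lemma right_unit_mull c x : has_right_unit x -> has_right_unit (c ** x).
Proof. by move=> [f [hf e]]; exists f; rewrite -rmulA e. Qed.

(* Two elements with right units in I have a common one,
   f1 + u - f1 u with u a right unit of f2 - f2 f1; hence the elements having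
   a right unit in I form an additive group. *)
Lemma right_unit_sub x y :
  has_right_unit x -> has_right_unit y -> has_right_unit (x - y).
Proof.
move=> [f1 [h1 e1]] [f2 [h2 e2]].
have [_ [u [_ [hu [_ eu]]]]] := Iunit (IB h2 (IM h2 h1)).
have f1_unit : x ** (f1 + u - f1 ** u) = x.
  by rewrite rmulBr rmulDr rmulA e1 addrK.
have f2_unit : f2 ** (f1 + u - f1 ** u) = f2.
  have -> : f2 ** (f1 + u - f1 ** u) = f2 ** f1 + (f2 - f2 ** f1) ** u.
    by rewrite rmulBr rmulDr rmulBl rmulA addrA.
  by rewrite eu addrC subrK.
exists (f1 + u - f1 ** u); split; first by apply: IB; [apply: subring_add | apply: IM].
by rewrite rmulBl f1_unit -{1}e2 -rmulA f2_unit e2.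
Qed.

Lemma right_unit_prodset (X Y : B -> Prop) e x : prodset X Y e ->
  (forall v, Y v -> I (v ** x)) -> has_right_unit (e ** x).
Proof.
move=> he hY; elim: he => [z [u [v [hu [hv ->]]]]| |a b _ ha _ hb].
- have [_ [f [_ [hf [_ ef]]]]] := Iunit (hY v hv).
  by rewrite -rmulA; apply: right_unit_mull; exists f.
- by exists 0; rewrite !rmul0r.
- by rewrite rmulBl; apply: right_unit_sub.
Qed.

End CommonUnits.

Section Representation.
Variables (R : rng) (sys : rsystem R) (B : rng).
Variables (S : sysP sys -> B) (T : sysQ sys -> B) (sigma : R -> B).
Hypothesis Hcov : covrep S T sigma.

Lemma S_add : {morph S : x y / x + y}. Proof. by case: Hcov => -[]. Qed.
Lemma T_add : {morph T : x y / x + y}. Proof. by case: Hcov => -[]. Qed.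
Lemma sigma_add : {morph sigma : x y / x + y}. Proof. by case: Hcov => _ []. Qed.
Lemma sigmaM r r' : sigma (r ** r') = sigma r ** sigma r'.
Proof. by case: Hcov => _ []. Qed.
Lemma S_ract p r : S (p <* r) = S p ** sigma r. Proof. by case: Hcov => _ _ []. Qed.
Lemma S_lact r p : S (r *> p) = sigma r ** S p. Proof. by case: Hcov => _ _ []. Qed.
Lemma T_ract q r : T (q <* r) = T q ** sigma r. Proof. by case: Hcov => _ _ _ []. Qed.
Lemma T_lact r q : T (r *> q) = sigma r ** T q. Proof. by case: Hcov => _ _ _ []. Qed.
Lemma sigma_psi p q : sigma (psi p q) = S p ** T q. Proof. by case: Hcov. Qed.

Fixpoint Tword (n : nat) (y : B) : Prop :=
  match n with
  | 0%N => exists r, y = sigma r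
  | n'.+1 => exists q y', Tword n' y' /\ y = T q ** y'
  end.

Fixpoint Sword (n : nat) (y : B) : Prop :=
  match n with
  | 0%N => exists r, y = sigma r
  | n'.+1 => exists p y', Sword n' y' /\ y = y' ** S p
  end.

Lemma sigma_Tword n r t : Tword n t -> Tword n (sigma r ** t).
Proof.
case: n => [[r' ->]|n [q [y' [h ->]]]] /=; first by exists (r ** r'); rewrite sigmaM.
by exists (r *> q), y'; rewrite T_lact rmulA.
Qed.

Lemma Sword_sigma n r u : Sword n u -> Sword n (u ** sigma r).
Proof.
case: n => [[r' ->]|n [p [y' [h ->]]]] /=; first by exists (r' ** r); rewrite sigmaM.
by exists (p <* r), y'; rewrite S_ract rmulA.
Qed.

Lemma Tword_cat a c t v : Tword a t -> Tword c v -> Tword (a + c) (t ** v).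
Proof.
elim: a t => [|a IH] t /=; first by move=> [r ->] hv; apply: sigma_Tword.
move=> [q [y' [h ->]]] hv; exists q, (y' ** v).
by rewrite rmulA; split => //; apply: IH.
Qed.

Lemma Sword_cat a c u v : Sword a u -> Sword c v -> Sword (a + c) (u ** v).
Proof.
elim: c v => [|c IH] v /=; first by move=> hu [r ->]; rewrite addn0; apply: Sword_sigma.
move=> hu [p [y' [h ->]]]; rewrite addnS; exists p, (u ** y').
by rewrite rmulA; split => //; apply: IH.
Qed.

Lemma Sword_opp n u : Sword n u -> Sword n (- u).
Proof.
elim: n u => [|n IH] u /=.
  move=> [r ->]; exists (- r).
  by rewrite -[- r]sub0r (additiveB sigma_add) (additive0 sigma_add) sub0r.
by move=> [p [y' [h ->]]]; exists p, (- y'); rewrite rmulNr; split => //; apply: IH.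
Qed.

(* An S-word followed by a T-word collapses, through
   S(p) T(q) = sigma(psi(p, q)), to a shorter S-word or T-word. *)
Lemma Sword_Tword b c u t : Sword b u -> Tword c t ->
  ((c <= b)%N -> Sword (b - c) (u ** t)) /\ ((b <= c)%N -> Tword (c - b) (u ** t)).
Proof.
elim: b c u t => [|b IH] c u t /=.
  move=> [r ->] ht; split; last by rewrite subn0 => _; apply: sigma_Tword.
  rewrite leqn0 => /eqP c0; move: ht; rewrite c0 => -[r' ->] /=.
  by exists (r ** r'); rewrite sigmaM.
move=> [p [y' [hy ->]]]; case: c t => [|c] t /=.
  move=> [r ->]; split => // _; exists (p <* r), y'.
  by rewrite S_ract rmulA.
move=> [q [t' [ht ->]]].
have -> : y' ** S p ** (T q ** t') = y' ** (sigma (psi p q) ** t').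
  by rewrite sigma_psi !rmulA.
by rewrite subSS !ltnS; apply: IH => //; apply: sigma_Tword.
Qed.

Definition monomial (k : int) (m : B) : Prop :=
  exists (a b : nat) t u, [/\ a%:Z - b%:Z = k, Tword a t, Sword b u & m = t ** u].

Lemma monomial_mul k l m m' :
  monomial k m -> monomial l m' -> monomial (k + l) (m ** m').
Proof.
move=> [a [b [t [u [<- ht hu ->]]]]] [c [d [t' [u' [<- ht' hu' ->]]]]].
have [Sw Tw] := Sword_Tword hu ht'.
case: (leqP c b) => [cb|/ltnW bc].
- exists a, (b - c + d)%N, t, (u ** t' ** u'); split => //; last by rewrite !rmulA.
    by lia.
  exact: Sword_cat (Sw cb) hu'.
- exists (a + (c - b))%N, d, (t ** (u ** t')), u'; split => //; last by rewrite !rmulA.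
    by lia.
  exact: Tword_cat ht (Tw bc).
Qed.

Lemma monomial_opp k m : monomial k m -> monomial k (- m).
Proof.
move=> [a [b [t [u [e ht hu ->]]]]]; exists a, b, t, (- u).
by rewrite rmulrN; split => //; apply: Sword_opp.
Qed.

Hypothesis Hsys : s_unital_rsystem sys.

Lemma sigma_left_unit r : exists a, sigma r = sigma a ** sigma r.
Proof. by have [/(_ r) [a [_ [ha _]]] _] := Hsys; exists a; rewrite -sigmaM ha. Qed.

(* The generators sigma(r), T(q), S(p) are monomials of degree 0, 1, -1;
   the missing factors sigma(r) are supplied by s-unitality. *)
Lemma monomial_sigma r : monomial 0 (sigma r).
Proof.
have [a ha] := sigma_left_unit r.
by exists 0%N, 0%N, (sigma a), (sigma r); split => //; [exists a | exists r].
Qed.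

Lemma monomial_T q : monomial 1 (T q).
Proof.
have [_ [_ /(_ q) [_ [r0 [_ hq]]]]] := Hsys.
have [/(_ r0) [_ [b1 [_ hb]]] _] := Hsys.
exists 1%N, 0%N, (T q ** sigma r0), (sigma b1); split => //.
- by exists q, (sigma r0); split => //; exists r0.
- by exists b1.
- by rewrite -rmulA -sigmaM hb -T_ract hq.
Qed.

Lemma monomial_S p : monomial (-1) (S p).
Proof.
have [_ [/(_ p) [r0 [_ [hp _]]] _]] := Hsys.
have [/(_ r0) [a1 [_ [ha _]]] _] := Hsys.
exists 0%N, 1%N, (sigma a1), (sigma r0 ** S p); split => //.
- by exists a1.
- by exists p, (sigma r0); split => //; exists r0.
- by rewrite rmulA -sigmaM ha -S_lact hp.
Qed.

Hypothesis Hgen : forall b : B, subrng_gen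
  (fun x => (exists r, x = sigma r) \/ (exists p, x = S p) \/ (exists q, x = T q)) b.

Lemma monomial_decomposition z : exists L : seq (int * B),
  (forall l, l \in L -> monomial l.1 l.2) /\ z = \sum_(l <- L) l.2.
Proof.
elim: (Hgen z) => {z} [x [[r ->]|[[p ->]|[q ->]]]| |x y _ [Lx [hx ->]] _ [Ly [hy ->]]
                      |x y _ [Lx [hx ->]] _ [Ly [hy ->]]].
- by exists [:: (0, sigma r)]; rewrite big_seq1; split=> // l /[1!inE] /eqP ->;
    apply: monomial_sigma.
- by exists [:: (-1, S p)]; rewrite big_seq1; split=> // l /[1!inE] /eqP ->;
    apply: monomial_S.
- by exists [:: (1, T q)]; rewrite big_seq1; split=> // l /[1!inE] /eqP ->;
    apply: monomial_T.
- by exists [::]; rewrite big_nil.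
- exists (Lx ++ [seq (l.1, - l.2) | l <- Ly]); rewrite big_cat big_map sumrN.
  split=> // l; rewrite mem_cat => /orP[/hx //|/mapP [l' /hy h ->]].
  exact: monomial_opp.
- exists [seq (l.1 + l'.1, l.2 ** l'.2) | l <- Lx, l' <- Ly]; split.
    move=> l /allpairsP [[l1 l2] [/= h1 h2 ->]].
    by apply: monomial_mul; [apply: hx | apply: hy].
  rewrite big_allpairs_dep /= rmul_suml; apply: eq_bigr => l _.
  by rewrite rmul_sumr.
Qed.

Lemma monomial_left_sigma k m : monomial k m -> exists r, m = sigma r ** m.
Proof.
move=> [[|a] [b [t [u [_ ht _ ->]]]]] /=.
  by case: ht => r' ->; have [r e] := sigma_left_unit r'; exists r; rewrite rmulA -e.
case: ht => [q [y' [_ ->]]]; have [_ [_ /(_ q) [r0 [_ [hq _]]]]] := Hsys.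
by exists r0; rewrite !rmulA -T_lact hq.
Qed.

Variable Bi : int -> B -> Prop.
Hypothesis gradB : Zgrading Bi.
Hypothesis Bi_sigma : forall r, Bi 0 (sigma r).
Hypothesis Bi_T : forall q, Bi 1 (T q).
Hypothesis Bi_S : forall p, Bi (-1) (S p).

Lemma monomial_deg k m : monomial k m -> Bi k m.
Proof.
have Tword_deg n t : Tword n t -> Bi n t.
  elim: n t => [|n IH] t /=; first by move=> [r ->]; apply: Bi_sigma.
  by move=> [q [y' [h ->]]]; apply: (gradeM gradB _ (Bi_T q) (IH _ h)); lia.
have Sword_deg n u : Sword n u -> Bi (- n%:Z) u.
  elim: n u => [|n IH] u /=; first by move=> [r ->]; apply: Bi_sigma.
  by move=> [p [y' [h ->]]]; apply: (gradeM gradB _ (IH _ h) (Bi_S p)); lia.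
move=> [a [b [t [u [<- ht hu ->]]]]].
exact: (gradeM gradB erefl (Tword_deg _ _ ht) (Sword_deg _ _ hu)).
Qed.

Lemma homogeneous_monomials k z : Bi k z ->
  exists L : seq B, (forall m, m \in L -> monomial k m) /\ z = \sum_(m <- L) m.
Proof.
move=> hz; have [L [hL hs]] := monomial_decomposition z.
exists [seq l.2 | l <- L & l.1 == k]; split.
  by move=> m /mapP [l]; rewrite mem_filter => /andP[/eqP <- /hL] ? ->.
rewrite big_map big_filter; apply: homogeneous_part hz hs => // l /hL.
exact: monomial_deg.
Qed.

Fixpoint Tprefix (n : nat) (y : B) : Prop :=
  match n with
  | 0%N => True
  | n'.+1 => exists q y', Tprefix n' y' /\ y = T q ** y'
  end.

Lemma Tprefix_sigma n r y : Tprefix n.+1 y -> Tprefix n.+1 (sigma r ** y).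
Proof. by move=> [q [y' [h ->]]]; exists (r *> q), y'; rewrite T_lact rmulA. Qed.

Lemma monomial_Tprefix n k m : monomial k m -> n%:Z <= k -> Tprefix n m.
Proof.
move=> [a [b [t [u [<- ht _ ->]]]]] nk.
have : (n <= a)%N by lia.
elim: n a t ht {nk} => [//|n IH] [|a] t //= [q [y' [h ->]]] na.
by exists q, (y' ** u); rewrite rmulA; split => //; apply: IH h na.
Qed.

Definition realizes (e : B) (Theta : sysQ sys -> sysQ sys) (Z : seq (sysQ sys * B)) :=
  forall z, z \in Z -> e ** (T z.1 ** z.2) = T (Theta z.1) ** z.2.

(* The maps realized by elements of XY form an additive group, so it
   suffices to realize the generators theta_{q,p} of F_P(Q). *)
Lemma FPQ_realized (X Y : B -> Prop) Z :
  (forall q p, exists e, prodset X Y e /\ realizes e (fun x => q <* psi p x) Z) ->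
  forall Theta, FPQ Theta -> exists e, prodset X Y e /\ realizes e Theta Z.
Proof.
move=> hgen Theta; elim => [q p| |f g _ [e1 [h1 E1]] _ [e2 [h2 E2]]].
- exact: hgen.
- by exists 0; split=> [|z _]; [apply: as_zero | rewrite (additive0 T_add) !rmul0r].
- exists (e1 - e2); split=> [|z hz]; first exact: as_sub.
  by rewrite rmulBl E1 // E2 // (additiveB T_add) rmulBl.
Qed.

Hypothesis HFS : condFS sys.

(* Condition (FS) reduces left units for a finite family of elements
   beginning with n+1 letters T(q) to realizing each theta_{q,p} on the
   decompositions y = T(q) y' of the family. *)
Lemma left_unit_from_FS (X Y : B -> Prop) n (ys : seq B) :
  (forall y, y \in ys -> Tprefix n.+1 y) ->
  (forall Z, (forall z, z \in Z -> Tprefix n z.2) -> forall q p,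
     exists e, prodset X Y e /\ realizes e (fun x => q <* psi p x) Z) ->
  exists e, prodset X Y e /\ forall y, y \in ys -> e ** y = y.
Proof.
move=> hys hgen.
have [f hf] : exists f : B -> sysQ sys * B,
    forall y, y \in ys -> Tprefix n (f y).2 /\ y = T (f y).1 ** (f y).2.
  apply: (fin_choice (0, 0) (P := fun y w => Tprefix n w.2 /\ y = T w.1 ** w.2)).
  by move=> y /hys [q [y' [h ->]]]; exists (q, y').
have [Theta [_ [hTheta [_ [fixTheta _]]]]] := HFS [seq (f y).1 | y <- ys] [::].
have [|e [he He]] := @FPQ_realized X Y (map f ys) _ Theta hTheta.
  by apply: hgen => _ /mapP [y /hf [h _] ->].
exists e; split => // y hy; have [_ ey] := hf y hy.
rewrite ey He ?map_f // fixTheta //.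
exact: (map_f (fun y => (f y).1)).
Qed.

(* The generator
   theta_{q,p} is realized by T(q) S(p), resp. by T(q) c S(p) where c is a
   common left unit of the sigma(psi(p, q')) y'. *)
Lemma Tprefix_left_unit n (ys : seq B) : (forall y, y \in ys -> Tprefix n.+1 y) ->
  exists e, prodset (Bi n.+1) (Bi (- n.+1%:Z)) e /\ forall y, y \in ys -> e ** y = y.
Proof.
elim: n ys => [|n IH] ys hys; apply: (left_unit_from_FS hys) => Z hZ q p.
  exists (T q ** S p); split; first exact: prodset_gen.
  by move=> z _; rewrite T_ract sigma_psi !rmulA.
have [|c [hc Hc]] := IH [seq sigma (psi p z.1) ** z.2 | z <- Z].
  by move=> _ /mapP [z /hZ h ->]; apply: Tprefix_sigma.
exists (T q ** c ** S p); split.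
  apply: prodset_mul hc => [x hx|y hy].
    by apply: (gradeM gradB _ (Bi_T q) hx); lia.
  by apply: (gradeM gradB _ hy (Bi_S p)); lia.
move=> z hz; rewrite T_ract -!rmulA [S p ** _]rmulA -sigma_psi.
by rewrite Hc ?rmulA // (map_f (fun z => sigma (psi p z.1) ** z.2)).
Qed.

Hypothesis Hsf : semi_full sys sigma Bi.
Hypothesis HI : forall k : nat, s_unital_subset (Ik sys sigma Bi k).

Lemma Ik_B0 k x : Ik sys sigma Bi k x -> Bi 0 x.
Proof.
apply: ideal_gen_closed => [|y z|y z|y]; first exact: (grade0 gradB 0).
- exact: gradeB.
- exact: gradeM.
- by case: k => [[r [r' ->]]|k [ps [qs [_ [_ ->]]]]].
Qed.

Lemma IkM k x y :
  Ik sys sigma Bi k x -> Ik sys sigma Bi k y -> Ik sys sigma Bi k (x ** y).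
Proof. by move=> hx hy; apply: ig_mulr (Ik_B0 hy) hx. Qed.

(* In degree 0, every monomial m = sigma(r) m lies in B_0B_0 = I^(0),
   which is s-unital. *)
Lemma degree0_units x : Bi 0 x -> exists a b,
  prodset (Bi 0) (Bi 0) a /\ prodset (Bi 0) (Bi 0) b /\ a ** x = x /\ x ** b = x.
Proof.
have semi_full0 y : prodset (Bi 0) (Bi 0) y <-> Ik sys sigma Bi 0 y.
  by rewrite -[X in prodset X]/(Bi (- 0%:Z)); apply: Hsf.
move=> /homogeneous_monomials [L [hL ->]].
have : Ik sys sigma Bi 0 (\sum_(m <- L) m).
  rewrite big_seq; apply: big_ind => [|y z hy hz|m /hL hm]; first exact: ig_zero.
    exact: (subring_add (@ig_zero _ _ _) (@ig_sub _ _ _)).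
  have [r ->] := monomial_left_sigma hm.
  by apply/semi_full0/prodset_gen; [apply: Bi_sigma | apply: monomial_deg hm].
move=> /HI [a [b [ha [hb [ea eb]]]]].
by exists a, b; split; [apply/semi_full0 | split; [apply/semi_full0 |]].
Qed.

(* In degree n+1 > 0, a left unit e in B_{n+1}B_{-(n+1)} comes from (FS);
   a right unit comes from s-unitality of I^(n+1) = B_{-(n+1)}B_{n+1},
   which contains B_{-(n+1)} x. *)
Lemma positive_degree_units n x : Bi n.+1 x -> exists a b,
  prodset (Bi n.+1) (Bi (- n.+1%:Z)) a /\ prodset (Bi (- n.+1%:Z)) (Bi n.+1) b /\
  a ** x = x /\ x ** b = x.
Proof.
move=> hx; have [L [hL ex]] := homogeneous_monomials hx.
have [|e [he He]] := @Tprefix_left_unit n L.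
  by move=> m /hL hm; apply: monomial_Tprefix hm _.
have eex : e ** x = x.
  by rewrite [in LHS]ex rmul_sumr [in RHS]ex; apply: eq_big_seq => m /He.
have [|f [hf ef]] := right_unit_prodset (@ig_zero _ _ _) (@ig_sub _ _ _)
  (@IkM n.+1) (@HI n.+1) (x := x) he.
  by move=> v hv; apply/Hsf/prodset_gen.
by rewrite eex in ef; exists e, f; split; [|split; [apply/Hsf|]].
Qed.

End Representation.

Lemma graded_degree0_units (R : rng) (sys : rsystem R) (B : rng)
    (S : sysP sys -> B) (T : sysQ sys -> B) (sigma : R -> B) (Bi : int -> B -> Prop) :
  s_unital_rsystem sys -> graded_covrep S T sigma Bi -> semi_full sys sigma Bi ->
  (forall k : nat, s_unital_subset (Ik sys sigma Bi k)) ->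
  forall x, Bi 0 x -> exists a b,
    prodset (Bi 0) (Bi 0) a /\ prodset (Bi 0) (Bi 0) b /\ a ** x = x /\ x ** b = x.
Proof.
move=> Hsys Hrep Hsf HI; have [Hcov Hgen gradB Bi_sigma [Bi_T Bi_S]] := Hrep.
exact: (degree0_units Hcov Hsys Hgen gradB Bi_sigma Bi_T Bi_S Hsf HI).
Qed.

Lemma graded_positive_degree_units (R : rng) (sys : rsystem R) (B : rng)
    (S : sysP sys -> B) (T : sysQ sys -> B) (sigma : R -> B) (Bi : int -> B -> Prop) :
  s_unital_rsystem sys -> graded_covrep S T sigma Bi -> semi_full sys sigma Bi ->
  condFS sys -> (forall k : nat, s_unital_subset (Ik sys sigma Bi k)) ->
  forall n x, Bi n.+1 x -> exists a b,
    prodset (Bi n.+1) (Bi (- n.+1%:Z)) a /\ prodset (Bi (- n.+1%:Z)) (Bi n.+1) b /\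
    a ** x = x /\ x ** b = x.
Proof.
move=> Hsys Hrep Hsf HFS HI n x.
have [Hcov Hgen gradB Bi_sigma [Bi_T Bi_S]] := Hrep.
exact: (positive_degree_units Hcov Hsys Hgen gradB Bi_sigma Bi_T Bi_S HFS Hsf HI).
Qed.

Definition bimod_op (R : rng) (M : bimod R R) : bimod (rng_op R) (rng_op R) :=
  @Bimod (rng_op R) (rng_op R) M (fun a m => @ract R R M m a) (fun m b => @lact R R M b m)
    (fun a a' m => @ractDr R R M m a a') (fun a m m' => @ractDl R R M m m' a)
    (fun m m' b => @lactDr R R M b m m') (fun m b b' => @lactDl R R M b b' m)
    (fun a a' m => @ractA R R M m a' a) (fun m b b' => @lactA R R M b' b m)
    (fun a m b => esym (@lact_ract R R M b m a)).

Definition rsystem_op (R : rng) (sys : rsystem R) : rsystem (rng_op R) :=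
  @RSystem (rng_op R) (bimod_op (sysQ sys)) (bimod_op (sysP sys))
    (fun q p => psi p q)
    (fun q q' p => @psiDr R sys p q q') (fun q p p' => @psiDl R sys p p' q)
    (fun q r p => esym (@psi_bal R sys p r q))
    (fun r q p => @psi_lin_r R sys p q r) (fun q p r => @psi_lin_l R sys r p q).

Lemma psiE_op (R : rng) (sys : rsystem R) ps qs :
  psiE (rsystem_op sys) qs ps = psiE sys ps qs.
Proof.
elim: ps qs => [|p ps IH] [|q qs] /=; [done | by case: qs | by case: ps IH |].
by rewrite IH psi_bal; clear IH; case: ps qs => [|? ?] [|? ?].
Qed.

Section OppositeSystem.
Variables (R : rng) (sys : rsystem R) (B : rng).
Variables (S : sysP sys -> B) (T : sysQ sys -> B) (sigma : R -> B).
Variable Bi : int -> B -> Prop.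

Lemma s_unital_rsystem_op : s_unital_rsystem sys -> s_unital_rsystem (rsystem_op sys).
Proof.
move=> [HR [HP HQ]]; split; [|split].
- by move=> x; have [a [b [ha hb]]] := HR x; exists b, a.
- by move=> x; have [a [b [ha hb]]] := HQ x; exists b, a.
- by move=> x; have [a [b [ha hb]]] := HP x; exists b, a.
Qed.

Lemma graded_covrep_op : graded_covrep S T sigma Bi ->
  graded_covrep (B := rng_op B) (sys := rsystem_op sys) T S sigma (fun i => Bi (- i)).
Proof.
move=> Hrep; have [Hcov Hgen gradB Bi_sigma [Bi_T Bi_S]] := Hrep.
split=> [|b|||]; rewrite ?oppr0 ?opprK //.
- split.
  + by split; [exact: T_add Hcov | exact: S_add Hcov].
  + by split=> [|r r']; [exact: sigma_add Hcov | exact: sigmaM Hcov r' r].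
  + by split=> [q r|r q]; [exact: (T_lact Hcov r q) | exact: (T_ract Hcov q r)].
  + by split=> [p r|r p]; [exact: (S_lact Hcov r p) | exact: (S_ract Hcov p r)].
  + by move=> q p; exact: sigma_psi Hcov p q.
- elim: (Hgen b) => [x [hr|[hp|hq]]| |x y _ hx _ hy|x y _ hx _ hy].
  + by apply: sr_gen; left.
  + by apply: sr_gen; right; right.
  + by apply: sr_gen; right; left.
  + exact: sr_zero.
  + exact: sr_sub.
  + exact: (sr_mul (B := rng_op B)).
- exact: Zgrading_op.
Qed.

Lemma Ik_op k x :
  Ik (B := rng_op B) (rsystem_op sys) sigma (fun i => Bi (- i)) k x <->
  Ik sys sigma Bi k x.
Proof.
rewrite /Ik /= oppr0; apply: ideal_gen_op => y.
case: k => [|k] /=; split.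
- by move=> [r [r' ->]]; exists r', r.
- by move=> [r [r' ->]]; exists r', r.
- by move=> [qs [ps [hq [hp ->]]]]; exists ps, qs; rewrite psiE_op.
- by move=> [ps [qs [hp [hq ->]]]]; exists qs, ps; rewrite psiE_op.
Qed.

Lemma semi_full_op : semi_full sys sigma Bi ->
  semi_full (B := rng_op B) (rsystem_op sys) sigma (fun i => Bi (- i)).
Proof.
move=> Hsf k x; rewrite opprK; split.
- by move=> /prodset_op /Hsf hx; apply/Ik_op.
- by move=> /Ik_op /Hsf hx; apply/prodset_op.
Qed.

Lemma s_unital_Ik_op : (forall k : nat, s_unital_subset (Ik sys sigma Bi k)) ->
  forall k : nat,
  s_unital_subset (Ik (B := rng_op B) (rsystem_op sys) sigma (fun i => Bi (- i)) k).
Proof.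
move=> HI k x /Ik_op /HI [a [b [ha [hb [ea eb]]]]].
by exists b, a; split; [apply/Ik_op | split; [apply/Ik_op |]].
Qed.

(* F_P(Q) of the opposite system is F_Q(P), and conversely. *)
Lemma condFS_op : condFS sys -> condFS (rsystem_op sys).
Proof.
move=> HFS qs ps; have [Theta [Phi [hTheta [hPhi [fixTheta fixPhi]]]]] := HFS ps qs.
exists Phi, Theta; split; [|split; [|by split]].
- elim: hPhi => [p q| |f g _ hf _ hg]; last exact: fpq_sub.
  + exact: (fpq_theta (sys := rsystem_op sys) p q).
  + exact: fpq_zero.
- elim: hTheta => [q p| |f g _ hf _ hg]; last exact: fqp_sub.
  + exact: (fqp_theta (sys := rsystem_op sys) q p).
  + exact: fqp_zero.
Qed.

End OppositeSystem.

Theorem mainTheorem8 (R : rng) (sys : rsystem R) (B : rng)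
    (S : sysP sys -> B) (T : sysQ sys -> B) (sigma : R -> B)
    (Bi : int -> B -> Prop) :
  s_unital_rng R ->
  s_unital_rsystem sys ->
  graded_covrep S T sigma Bi ->
  semi_full sys sigma Bi ->
  condFS sys ->
  (forall k : nat, s_unital_subset (Ik sys sigma Bi k)) ->
  nearly_eps_strong Bi.
Proof.
move=> _ Hsys Hrep Hsf HFS HI [[|n]|n] x hx.
- by rewrite oppr0; apply: graded_degree0_units Hsys Hrep Hsf HI x hx.
- exact: graded_positive_degree_units Hsys Hrep Hsf HFS HI n x hx.
- (* degree -(n+1) is degree n+1 for the opposite system *)
  move: hx; rewrite NegzE opprK => hx.
  have [a [b [ha [hb [ea eb]]]]] := graded_positive_degree_units
    (s_unital_rsystem_op Hsys) (graded_covrep_op Hrep) (semi_full_op Hsf)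
    (condFS_op HFS) (s_unital_Ik_op HI) hx.
  rewrite opprK in ha hb; exists b, a.
  by split; [apply/prodset_op | split; [apply/prodset_op |]].
Qed.
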